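(* For the toy interacting scalar field, the interacting SDR is $i_{\mathrm{int}}=$ inclusion of constants $\mathbb C[[\hbar]]\to\mathbb C[[x,\xi]][[\hbar]]$, $p_{\mathrm{int}}(O)=\langle e^{\frac{\mathrm{i}}{\hbar}P}O\rangle/\langle e^{\frac{\mathrm{i}}{\hbar}P}\rangle$ (perturbative expectation value of $O(x)$ w.r.t. $S$), $K_{\mathrm{int}}(\xi f(x))=0$, and its classical limit is $$K^{\mathrm{cl}}_{\mathrm{int}}(O)=\xi\,\frac{O(x)-O(0)}{S'(x)}=\xi\,\frac{O(x)-O(0)}{x+P'(x)}\qquad (O=O(x)\in\mathbb C[[x]]),$$ the quotient being understood as a formal power series.
   Context: Toy scalar field: $\mathcal F=\mathbb R\oplus\mathbb R[-1]$ with even coordinate $x$ (degree $0$) and odd coordinate $\xi$ (degree $-1$), $\omega=\delta x\wedge\delta\xi$, $\Delta=\partial_x\partial_\xi$, $\mathcal F'=0$, differential $d$ such that $S_0=\frac{x^2}{2}$, chain contraction $\kappa$ with $\hat\kappa=\xi\partial_x$. Action $S(x)=\frac{x^2}{2}+P(x)$ with $P(x)=\sum_{n\ge3}\frac{P_n}{n!}x^n$ a polynomial; $S'$ denotes the derivative in $x$. BV differential $Q_\hbar=S'(x)\partial_\xi-\mathrm{i}\hbar\partial_x\partial_\xi$ on $\mathbb C[[x,\xi]][[\hbar]]$. Free classical SDR: $i$ = inclusion of constants, $p$ = constant term, $K=\nu\hat\kappa$ (so $K(x^N)=x^{N-1}\xi$ for $N\ge1$, $K(1)=0$, $K(\xi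 f)=0$). $(i_{\mathrm{int}},p_{\mathrm{int}},K_{\mathrm{int}})$ is obtained by the homological perturbation lemma from $(i,p,K)$ with perturbation $\delta=P'(x)\partial_\xi-\mathrm{i}\hbar\partial_x\partial_\xi$, i.e. $K_{\mathrm{int}}=\sum_kK(-\delta K)^k$ etc. The Gaussian average $\langle F\rangle=(e^{\frac{\mathrm{i}\hbar}{2}\partial_x^2}F)|_{x=0}$. $K^{\mathrm{cl}}_{\mathrm{int}}$ denotes $K_{\mathrm{int}}$ modulo $\hbar$. *)

From HB Require Import structures.
From mathcomp Require Import all_boot all_order all_algebra all_field.
Set Implicit Arguments. Unset Strict Implicit. Unset Printing Implicit Defensive.
Import Order.TTheory GRing.Theory Num.Theory.
Local Open Scope ring_scope.

Notation C := algC.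

Definition ser := nat -> C.
(* Elements of C[[x]][[hbar]]: bs a b = coefficient of hbar^a x^b. *)
Definition bser := nat -> nat -> C.
(* Elements of C[[x,xi]][[hbar]] (xi odd, xi^2 = 0): a pair (f, g)
   representing  f(x,hbar) + xi g(x,hbar). *)
Definition sfield := (bser * bser)%type.

Definition sf_zero : sfield := (fun _ _ => 0, fun _ _ => 0).
Definition sf_opp (v : sfield) : sfield := (fun a b => - v.1 a b, fun a b => - v.2 a b).

Definition sf_converges (t : nat -> sfield) (L : sfield) : Prop :=
  forall a b,
    (exists N0, forall N, (N0 <= N)%N -> \sum_(k < N) (t k).1 a b = L.1 a b) /\
    (exists N0, forall N, (N0 <= N)%N -> \sum_(k < N) (t k).2 a b = L.2 a b).

Definition ser_converges (t : nat -> ser) (L : ser) : Prop :=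
  forall a, exists N0, forall N, (N0 <= N)%N -> \sum_(k < N) t k a = L a.

Definition smul (s t : ser) : ser := fun n => \sum_(j < n.+1) s j * t (n - j)%N.

Fixpoint sinv_upto (s : ser) (n : nat) : seq C :=
  match n with
  | 0 => [:: (s 0%N)^-1]
  | n'.+1 => let l := sinv_upto s n' in
             rcons l (- (s 0%N)^-1 * \sum_(j < n'.+1) s j.+1 * nth 0 l (n' - j)%N)
  end.
(* multiplicative inverse of s (when s 0 != 0) *)
Definition sinv (s : ser) : ser := fun n => nth 0 (sinv_upto s n) n.
Definition sdiv (s t : ser) : ser := smul s (sinv t).

Definition Spoly (P : {poly C}) : {poly C} := (2%:R)^-1 *: 'X^2 + P.
Definition Sprime (P : {poly C}) : {poly C} := (Spoly P)^`().

(* K(x^N) = x^(N-1) xi, K(1) = 0, K(xi f) = 0 *)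
Definition Kop (v : sfield) : sfield := (fun _ _ => 0, fun a b => v.1 a b.+1).
Definition incl (c : ser) : sfield :=
  (fun a b => if b is 0%N then c a else 0, fun _ _ => 0).
Definition proj (v : sfield) : ser := fun a => v.1 a 0%N.

(* Perturbation delta = P'(x) d_xi - i hbar d_x d_xi. *)
Definition deltaop (P : {poly C}) (v : sfield) : sfield :=
  (fun a b => \sum_(j < b.+1) (P^`())`_j * v.2 a (b - j)%N
              - (if a is a'.+1 then 'i * (b.+1)%:R * v.2 a' b.+1 else 0),
   fun _ _ => 0).

(* Homological perturbation lemma: the k-th terms of
   i_int = sum_k (-K delta)^k i,  p_int = sum_k p (-delta K)^k,
   K_int = sum_k K (-delta K)^k. *)
Definition iint_term (P : {poly C}) (c : ser) (k : nat) : sfield :=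
  iter k (fun w => sf_opp (Kop (deltaop P w))) (incl c).
Definition pint_term (P : {poly C}) (v : sfield) (k : nat) : ser :=
  proj (iter k (fun w => sf_opp (deltaop P (Kop w))) v).
Definition Kint_term (P : {poly C}) (v : sfield) (k : nat) : sfield :=
  Kop (iter k (fun w => sf_opp (deltaop P (Kop w))) v).

(* Perturbative expectation value  < e^{(i/hbar) P} O >  with
   < F > = (e^{(i hbar/2) d_x^2} F)|_{x=0}.
   Expanding e^{(i/hbar)P} O = sum_{a,m} (i^m/m!) hbar^(a-m) P^m O_a(x) and
   e^{(i hbar/2) d_x^2} = sum_k ((i/2)^k/k!) hbar^k d_x^(2k), the term
   (a, m, k) contributes to hbar^(a-m+k). *)
Definition dx (F : ser) : ser := fun b => (b.+1)%:R * F b.+1.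
Definition gterm (P : {poly C}) (O : bser) (a m k : nat) : C :=
  ('i ^+ m / (m`!)%:R) * (('i / 2%:R) ^+ k / (k`!)%:R) *
  iter (2 * k) dx (fun b => \sum_(j < b.+1) (P ^+ m)`_j * O a (b - j)%N) 0%N.
(* Since P has order >= 3, x^(2k) can only be hit
   when 2k >= 3m, so the only nonzero terms have k = n - a + m with
   a <= n and m <= 2(n - a) (and all negative hbar-powers vanish). *)
Definition expectP (P : {poly C}) (O : bser) : ser :=
  fun n => \sum_(a < n.+1) \sum_(m < (2 * (n - a)).+1) gterm P O a m (n - a + m)%N.

Definition one_obs : bser := fun a b => if (a == 0%N) && (b == 0%N) then 1 else 0.

Definition embed (O : ser) : sfield :=
  (fun a b => if a is 0%N then O b else 0, fun _ _ => 0).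

(* (O(x) - O(0)) / S'(x) as a formal power series:
   ((O(x)-O(0))/x) * (S'(x)/x)^{-1}; S'(x)/x has constant term 1. *)
Definition Kcl_coef (P : {poly C}) (O : ser) : ser :=
  sdiv (fun b => O b.+1) (fun b => (Sprime P)`_b.+1).

From HB Require Import structures.
From mathcomp Require Import all_boot all_order all_algebra all_field.
From mathcomp Require Import ring zify.
From Stdlib Require Import FunctionalExtensionality.
Import Order.TTheory GRing.Theory Num.Theory.
Local Open Scope ring_scope.

(* The statements on i_int and on K_int(xi f) only reflect that delta produces
   even elements while K produces odd ones.

   For p_int, write F = -delta K.  On an even element w one has
   w = i p w + F w + Q_hbar (K w), and Q_hbar-exact elements S' g - i hbar g'
   have vanishing expectation (Schwinger-Dyson equation: Gaussian integration
   by parts for x g, and the derivative of e^{iP/hbar} for P' g).  Summing,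
   <e^{iP/hbar} O> = (sum_{k<N} p F^k O) <e^{iP/hbar}> + <e^{iP/hbar} F^N O>,
   and since F lowers the weight 3 a + b of hbar^a x^b by at least one, the
   remainder and the tail of the series do not reach a fixed power of hbar.

   Modulo hbar, F multiplies by -P'(x)/x, so
   K_int O = xi sum_k (-P'/x)^k (O - O(0))/x = xi (O - O(0))/(x + P'). *)

(** * Formal power series in one variable *)

Definition sone : ser := fun n => if n is 0 then 1 else 0.
Definition szero : ser := fun _ => 0.
Definition sadd (f g : ser) : ser := fun b => f b + g b.
Definition sscale (c : C) (f : ser) : ser := fun b => c * f b.
Definition smulX (f : ser) : ser := fun b => if b is b'.+1 then f b' else 0.

Definition strunc (n : nat) (f : ser) : {poly C} := \poly_(i < n.+1) f i.

Lemma coef_strunc n f j : (j <= n)%N -> (strunc n f)`_j = f j.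
Proof. by move=> jn; rewrite coef_poly ltnS jn. Qed.

Lemma coefM_smul (p q : {poly C}) f g n :
  (forall j, (j <= n)%N -> p`_j = f j) -> (forall j, (j <= n)%N -> q`_j = g j) ->
  (p * q)`_n = smul f g n.
Proof.
move=> pf qg; rewrite coefM; apply: eq_bigr => j _.
by rewrite pf -1?ltnS // qg // leq_subr.
Qed.

(* Commutativity and associativity are inherited from {poly C} through
   truncation at the relevant degree. *)
Lemma smulC f g : smul f g = smul g f.
Proof.
apply: functional_extensionality => n.
have tr (s : ser) j : (j <= n)%N -> (strunc n s)`_j = s j by exact: coef_strunc.
rewrite -(@coefM_smul (strunc n f) (strunc n g)); try exact: tr.
by rewrite mulrC; apply: coefM_smul; exact: tr.
Qed.

Lemma smulA f g h : smul (smul f g) h = smul f (smul g h).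
Proof.
apply: functional_extensionality => n.
have tr (s : ser) j : (j <= n)%N -> (strunc n s)`_j = s j by exact: coef_strunc.
have trM (s t : ser) j : (j <= n)%N -> (strunc n s * strunc n t)`_j = smul s t j.
  by move=> jn; apply: coefM_smul => i ij; apply: tr (leq_trans ij jn).
rewrite -(@coefM_smul (strunc n f * strunc n g) (strunc n h)); try exact: tr; try exact: trM.
by rewrite -mulrA; apply: coefM_smul; [exact: tr | exact: trM].
Qed.

Lemma smuls1 f : smul f sone = f.
Proof.
apply: functional_extensionality => n.
rewrite /smul big_ord_recr /= subnn mulr1 big1 ?add0r // => j _.
by have := ltn_ord j; rewrite -subn_gt0; case: (n - j)%N => // k _; rewrite mulr0.
Qed.

Lemma smulBr s f g n : smul s (fun j => f j - g j) n = smul s f n - smul s g n.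
Proof. by rewrite /smul -sumrB; apply: eq_bigr => j _; rewrite mulrBr. Qed.

Lemma size_sinv_upto s n : size (sinv_upto s n) = n.+1.
Proof. by elim: n => [//|n IH] /=; rewrite size_rcons IH. Qed.

Lemma nth_sinv_upto s n j : (j <= n)%N -> nth 0 (sinv_upto s n) j = sinv s j.
Proof.
elim: n => [|n IH] jn; first by move: jn; rewrite leqn0 => /eqP ->.
case: (ltngtP j n.+1) jn => // [jn _|-> _] //.
by rewrite /= nth_rcons size_sinv_upto jn IH.
Qed.

Lemma sinvS s n :
  sinv s n.+1 = - (s 0%N)^-1 * \sum_(j < n.+1) s j.+1 * sinv s (n - j)%N.
Proof.
rewrite {1}/sinv /= nth_rcons size_sinv_upto ltnn eqxx; congr (_ * _).
by apply: eq_bigr => j _; rewrite nth_sinv_upto // leq_subr.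
Qed.

Lemma smul_sinv s : s 0%N != 0 -> smul s (sinv s) = sone.
Proof.
move=> s0; apply: functional_extensionality => -[|n].
  by rewrite /smul big_ord1 /sinv /= mulfV.
rewrite /smul big_ord_recl /= subn0 sinvS.
under eq_bigr => j _ do rewrite /bump leq0n add1n subSS.
by rewrite mulrA mulrN mulfV // mulN1r addNr.
Qed.

Lemma smulsK c s : s 0%N != 0 -> smul (smul c s) (sinv s) = c.
Proof. by move=> s0; rewrite smulA smul_sinv // smuls1. Qed.

(** * Polynomials acting on series *)

Definition pmul (p : {poly C}) (f : ser) : ser :=
  fun b => \sum_(j < b.+1) p`_j * f (b - j)%N.

Lemma pmulDl p q f : pmul (p + q) f = sadd (pmul p f) (pmul q f).
Proof.
apply: functional_extensionality => b; rewrite /pmul /sadd -big_split.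
by apply: eq_bigr => j _; rewrite coefD mulrDl.
Qed.

Lemma pmul0l f : pmul 0 f = szero.
Proof.
by apply: functional_extensionality => b; rewrite /pmul big1 // => j _; rewrite coef0 mul0r.
Qed.

Lemma pmulCl c f : pmul c%:P f = sscale c f.
Proof.
apply: functional_extensionality => b.
rewrite /pmul /sscale big_ord_recl coefC subn0 big1 ?addr0 // => j _.
by rewrite coefC mul0r.
Qed.

Lemma pmulZl c p f : pmul (c *: p) f = sscale c (pmul p f).
Proof.
apply: functional_extensionality => b; rewrite /pmul /sscale mulr_sumr.
by apply: eq_bigr => j _; rewrite coefZ mulrA.
Qed.

Lemma pmulMXl p f : pmul (p * 'X) f = smulX (pmul p f).
Proof.
apply: functional_extensionality => -[|b]; rewrite /pmul /smulX.
  by rewrite big_ord1 coefMX mul0r.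
rewrite big_ord_recl coefMX mul0r add0r; apply: eq_bigr => j _.
by rewrite coefMX subSS.
Qed.

Lemma pmul_smulX p f : pmul p (smulX f) = smulX (pmul p f).
Proof.
apply: functional_extensionality => -[|b]; rewrite /pmul /smulX.
  by rewrite big_ord1 mulr0.
rewrite big_ord_recr /= subnn mulr0 addr0; apply: eq_bigr => j _.
by rewrite subSn // -ltnS.
Qed.

Lemma pmulDr p f g : pmul p (sadd f g) = sadd (pmul p f) (pmul p g).
Proof.
apply: functional_extensionality => b; rewrite /pmul /sadd -big_split.
by apply: eq_bigr => j _; rewrite mulrDr.
Qed.

Lemma pmulZr p c f : pmul p (sscale c f) = sscale c (pmul p f).
Proof.
apply: functional_extensionality => b; rewrite /pmul /sscale mulr_sumr.
by apply: eq_bigr => j _; rewrite mulrCA.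
Qed.

Lemma pmul0r p : pmul p szero = szero.
Proof.
by apply: functional_extensionality => b; rewrite /pmul big1 // => j _; rewrite mulr0.
Qed.

Lemma pmulMl p q f : pmul (p * q) f = pmul p (pmul q f).
Proof.
elim/poly_ind: p => [|p c IH]; first by rewrite mul0r !pmul0l.
rewrite mulrDl -mulrA (mulrC 'X) mulrA mul_polyC pmulDl pmulMXl IH pmulZl.
by rewrite pmulDl pmulMXl pmulCl.
Qed.

Lemma pmulMnl p n f : pmul (p *+ n) f = sscale n%:R (pmul p f).
Proof. by rewrite -scaler_nat pmulZl. Qed.

Lemma dxD f g : dx (sadd f g) = sadd (dx f) (dx g).
Proof. by apply: functional_extensionality => b; rewrite /dx /sadd mulrDr. Qed.

Lemma dxZ c f : dx (sscale c f) = sscale c (dx f).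
Proof. by apply: functional_extensionality => b; rewrite /dx /sscale mulrCA. Qed.

Lemma dx0 : dx szero = szero.
Proof. by apply: functional_extensionality => b; rewrite /dx /szero mulr0. Qed.

Lemma iter_dxD n f g : iter n dx (sadd f g) = sadd (iter n dx f) (iter n dx g).
Proof. by elim: n => [//|n IH] /=; rewrite IH dxD. Qed.

Lemma iter_dxZ n c f : iter n dx (sscale c f) = sscale c (iter n dx f).
Proof. by elim: n => [//|n IH] /=; rewrite IH dxZ. Qed.

Lemma iter_dx0 n : iter n dx szero = szero.
Proof. by elim: n => [//|n IH] /=; rewrite IH dx0. Qed.

Lemma smulXD f g : smulX (sadd f g) = sadd (smulX f) (smulX g).
Proof.
by apply: functional_extensionality => -[|b]; rewrite /smulX /sadd ?addr0.
Qed.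

Lemma dx_smulX f : dx (smulX f) = sadd f (smulX (dx f)).
Proof.
apply: functional_extensionality => -[|b]; rewrite /dx /sadd /smulX.
  by rewrite mul1r addr0.
by rewrite [(b.+2)%:R]mulrS mulrDl mul1r.
Qed.

Lemma iter_dx_smulX n g :
  iter n.+1 dx (smulX g) = sadd (smulX (iter n.+1 dx g)) (sscale n.+1%:R (iter n dx g)).
Proof.
elim: n => [|n IH].
  by rewrite /= dx_smulX; apply: functional_extensionality => b;
     rewrite /sadd /sscale mul1r addrC.
rewrite iterS IH dxD dx_smulX dxZ.
by apply: functional_extensionality => b; rewrite /sadd /sscale /= [(n.+2)%:R]mulrS; ring.
Qed.

Lemma dx_pmul p f : dx (pmul p f) = sadd (pmul p^`() f) (pmul p (dx f)).
Proof.
elim/poly_ind: p => [|p c IH].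
  rewrite deriv0 !pmul0l dx0.
  by apply: functional_extensionality => b; rewrite /sadd /szero addr0.
rewrite derivMXaddC !pmulDl !pmulMXl !pmulCl dxD dx_smulX IH dxZ smulXD.
by apply: functional_extensionality => b; rewrite /sadd /sscale; ring.
Qed.

Lemma iter_dx_low (h : ser) N : (forall j, (j < N)%N -> h j = 0) ->
  forall n j, (j + n < N)%N -> iter n dx h j = 0.
Proof.
move=> h_low n; elim: n => [|n IH] j jn /=; first by rewrite h_low // -(addn0 j).
by rewrite /dx IH ?mulr0 // addSn -addnS.
Qed.

(** * Gaussian averages *)

Lemma natr_fact_neq0 k : (k`!)%:R != 0 :> C.
Proof. by rewrite pnatr_eq0 -lt0n fact_gt0. Qed.

(* Coefficient of hbar^k in <h> = (e^{(i hbar/2) d_x^2} h)(0). *)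
Definition gauss (k : nat) (h : ser) : C :=
  (('i / 2%:R) ^+ k / (k`!)%:R) * iter (2 * k) dx h 0%N.

Lemma gaussD k f g : gauss k (sadd f g) = gauss k f + gauss k g.
Proof. by rewrite /gauss iter_dxD /sadd mulrDr. Qed.

Lemma gaussZ k c f : gauss k (sscale c f) = c * gauss k f.
Proof. by rewrite /gauss iter_dxZ /sscale mulrCA. Qed.

Lemma gauss0 k : gauss k szero = 0.
Proof. by rewrite /gauss iter_dx0 /szero mulr0. Qed.

(* Gaussian integration by parts: <x h> = i hbar <h'>. *)
Lemma gauss_smulX k h : gauss k.+1 (smulX h) = 'i * gauss k (dx h).
Proof.
rewrite /gauss.
have -> : (2 * k.+1 = (2 * k).+2)%N by rewrite mulnS add2n.
rewrite iter_dx_smulX /sadd /sscale /= add0r -iterSr.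
have -> : ((2 * k).+2 = 2 * k.+1)%N by rewrite mulnS add2n.
have k1_neq0 : (k.+1)%:R != 0 :> C by rewrite pnatr_eq0.
have two_neq0 : 2%:R != 0 :> C by rewrite pnatr_eq0.
rewrite factS !natrM exprS -iterS; field.
by rewrite natr_fact_neq0 addrC natr1 k1_neq0.
Qed.

Lemma gauss_low k h : (forall j, (j <= 2 * k)%N -> h j = 0) -> gauss k h = 0.
Proof. by move=> h_low; rewrite /gauss (@iter_dx_low h (2 * k).+1) ?mulr0. Qed.

(** * Perturbative expectation values *)

Definition expi_coef (m : nat) : C := 'i ^+ m / (m`!)%:R.

Lemma expi_coefS m : 'i * expi_coef m.+1 * m.+1%:R = - expi_coef m.
Proof.
rewrite /expi_coef factS natrM exprS.
have m1_neq0 : (m.+1)%:R != 0 :> C by rewrite pnatr_eq0.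
have ii : 'i * 'i = -1 :> C by rewrite -expr2 sqrCi.
rewrite !mulrA ii mulN1r invfM !mulNr; congr (- _).
by rewrite -mulrA mulrAC mulVf // mul1r.
Qed.

(* [pexp P r f] is the coefficient of hbar^r in <e^{iP/hbar} f> for an
   hbar-independent f; [pexp_term P r m f] is the contribution of (iP/hbar)^m/m!. *)
Definition pexp_term (P : {poly C}) (r m : nat) (f : ser) : C :=
  expi_coef m * gauss (r + m) (pmul (P ^+ m) f).
Definition pexp (P : {poly C}) (r : nat) (f : ser) : C :=
  \sum_(m < (2 * r).+1) pexp_term P r m f.

Definition Sprime_mul (P : {poly C}) (f : ser) : ser := sadd (smulX f) (pmul P^`() f).

Lemma pexpD P r f g : pexp P r (sadd f g) = pexp P r f + pexp P r g.
Proof.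
rewrite /pexp -big_split; apply: eq_bigr => m _.
by rewrite /pexp_term pmulDr gaussD mulrDr.
Qed.

Lemma pexpZ P r c f : pexp P r (sscale c f) = c * pexp P r f.
Proof.
rewrite /pexp mulr_sumr; apply: eq_bigr => m _.
by rewrite /pexp_term pmulZr gaussZ mulrCA.
Qed.

Lemma pexp0 P r : pexp P r szero = 0.
Proof. by rewrite /pexp big1 // => m _; rewrite /pexp_term pmul0r gauss0 mulr0. Qed.

Lemma pexp_low P r f : (forall j, (j <= 6 * r)%N -> f j = 0) -> pexp P r f = 0.
Proof.
move=> f_low; rewrite /pexp big1 // => m _.
rewrite /pexp_term gauss_low ?mulr0 // => j jr; rewrite /pmul big1 // => i _.
by rewrite f_low ?mulr0 //; have := ltn_ord m; lia.
Qed.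

Section SchwingerDyson.
Variable P : {poly C}.
Hypothesis P_low : forall n, (n < 3)%N -> P`_n = 0.

Lemma coef_exp_low m j : (j < 3 * m)%N -> (P ^+ m)`_j = 0.
Proof.
elim: m j => [|m IH] j jm; first by rewrite muln0 in jm.
rewrite exprS coefM big1 // => i _.
have [i3|i3] := ltnP i 3; first by rewrite P_low // mul0r.
by rewrite IH ?mulr0 //; rewrite mulnS in jm; have := ltn_ord i; lia.
Qed.

Lemma derivP_low j : (j < 2)%N -> (P^`())`_j = 0.
Proof. by move=> j2; rewrite coef_deriv P_low ?mul0rn. Qed.

Lemma pexp_term_high r m f : (2 * r < m)%N -> pexp_term P r m f = 0.
Proof.
move=> rm; rewrite /pexp_term gauss_low ?mulr0 // => j jr.
by rewrite /pmul big1 // => i _; rewrite coef_exp_low ?mul0r //; have := ltn_ord i; lia.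
Qed.

Lemma pexpE r f M : (2 * r < M)%N -> \sum_(m < M) pexp_term P r m f = pexp P r f.
Proof.
move=> rM; have [t ->] : exists t, M = ((2 * r).+1 + t)%N by exists (M - (2 * r).+1)%N; lia.
elim: t => [|t IH]; first by rewrite addn0.
by rewrite addnS big_ord_recr /= IH pexp_term_high ?addr0 //; lia.
Qed.

Section Step.
Variables (r : nat) (f : ser).
Let g := pmul P^`() f.
Let X m := 'i * expi_coef m * m%:R * gauss (r + m) (pmul (P ^+ m.-1) g).
Let Y m := expi_coef m * gauss (r.+1 + m) (pmul (P ^+ m) g).

Lemma pexp_term_Sprime_mul m :
  pexp_term P r.+1 m (Sprime_mul P f) = 'i * pexp_term P r m (dx f) + X m + Y m.
Proof.
rewrite /pexp_term /Sprime_mul /X /Y /g pmulDr gaussD pmul_smulX addSn gauss_smulX.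
rewrite dx_pmul gaussD deriv_exp [P^`() * _]mulrC pmulMnl pmulMl gaussZ -addSn.
ring.
Qed.

(* The derivative of e^{iP/hbar} (the X terms) cancels the P' f part (the Y terms). *)
Lemma pexp_Sprime_mul : pexp P r.+1 (Sprime_mul P f) = 'i * pexp P r (dx f).
Proof.
rewrite -(@pexpE r.+1 _ (2 * r).+4); last lia.
rewrite -(@pexpE r (dx f) (2 * r).+4); last lia.
under eq_bigr do rewrite pexp_term_Sprime_mul.
rewrite !big_split /= -mulr_sumr [\sum_(i < _) X i]big_ord_recl /=.
have -> : X 0%N = 0 by rewrite /X mulr0 mul0r.
have -> : \sum_(i < (2 * r).+3) X (bump 0 i) = - \sum_(i < (2 * r).+3) Y i.
  rewrite -sumrN; apply: eq_bigr => i _.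
  by rewrite /bump leq0n add1n /X /Y expi_coefS addnS -addSn mulNr.
rewrite [\sum_(i < (2 * r).+4) Y i]big_ord_recr /=.
have -> : Y (2 * r).+3 = 0 by rewrite /Y -/(pexp_term P r.+1 _ g) pexp_term_high //; lia.
by rewrite add0r addr0 addrNK.
Qed.
End Step.

Lemma pexp0_Sprime_mul f : pexp P 0 (Sprime_mul P f) = 0.
Proof.
rewrite /pexp big_ord1 /pexp_term /gauss /= /pmul big_ord1 /Sprime_mul /sadd /smulX.
by rewrite /pmul big_ord1 coef_deriv P_low // mul0rn mul0r addr0 !mulr0.
Qed.

Lemma expectPE (u : bser) n : expectP P u n = \sum_(a < n.+1) pexp P (n - a) (u a).
Proof.
rewrite /expectP /pexp; apply: eq_bigr => a _; apply: eq_bigr => m _.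
by rewrite /gterm /pexp_term /expi_coef /gauss [RHS]mulrA.
Qed.

Lemma expectPD u v n :
  expectP P (fun a b => u a b + v a b) n = expectP P u n + expectP P v n.
Proof. by rewrite !expectPE -big_split; apply: eq_bigr => a _; exact: pexpD. Qed.

Lemma expectP0 n : expectP P (fun _ _ => 0) n = 0.
Proof. by rewrite expectPE big1 // => a _; exact: pexp0. Qed.

Lemma eq_expectP u v n : (forall a b, u a b = v a b) -> expectP P u n = expectP P v n.
Proof.
move=> uv; suff -> : u = v by [].
by apply: functional_extensionality => a; apply: functional_extensionality => b.
Qed.

(* Q_hbar (xi t) = S' t - i hbar t', with t a = coefficient of hbar^a. *)
Definition Qhbar (t : bser) : bser := fun a =>
  sadd (Sprime_mul P (t a)) (sscale (- 'i) (if a is a'.+1 then dx (t a') else szero)).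

Lemma sum_pexp_Sprime_mul (t : bser) n :
  \sum_(a < n.+1) pexp P (n - a) (Sprime_mul P (t a)) =
  \sum_(a < n) 'i * pexp P (n.-1 - a) (dx (t a)).
Proof.
rewrite big_ord_recr /= subnn pexp0_Sprime_mul addr0; apply: eq_bigr => a _.
have -> : (n - a = (n.-1 - a).+1)%N by have := ltn_ord a; lia.
by rewrite pexp_Sprime_mul.
Qed.

Lemma expectP_Qhbar t n : expectP P (Qhbar t) n = 0.
Proof.
rewrite expectPE; under eq_bigr do rewrite pexpD pexpZ.
rewrite big_split /= sum_pexp_Sprime_mul big_ord_recl /= pexp0 mulr0 add0r -big_split.
by rewrite big1 // => a _; rewrite /bump leq0n add1n subnS predn_sub add0n mulNr; exact: subrr.
Qed.

End SchwingerDyson.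

(** * The perturbed projection *)

Definition pstep (P : {poly C}) (w : sfield) : sfield := sf_opp (deltaop P (Kop w)).
Definition constb (c : ser) : bser := fun a b => if b is 0 then c a else 0.

Section Projection.
Variable P : {poly C}.
Hypothesis P_low : forall n, (n < 3)%N -> P`_n = 0.

Lemma pstep1E w a b : (pstep P w).1 a b =
  - (\sum_(j < b.+1) (P^`())`_j * w.1 a (b - j).+1
     - (if a is a'.+1 then 'i * (b.+1)%:R * w.1 a' b.+2 else 0)).
Proof. by []. Qed.

Lemma iter_pstep_low v k a b : (3 * a + b < k)%N -> (iter k (pstep P) v).1 a b = 0.
Proof.
elim: k a b => [//|k IH] a b abk.
rewrite iterS pstep1E big1 => [|j _]; last first.
  have [j2|j2] := ltnP j 2; first by rewrite derivP_low ?mul0r.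
  by rewrite IH ?mulr0 //; have := ltn_ord j; lia.
case: a abk => [|a] abk; first by rewrite subrr oppr0.
by rewrite IH ?mulr0 ?subrr ?oppr0 //; lia.
Qed.

Lemma pstep_decomp w a b : w.1 a b =
  constb (fun a => w.1 a 0%N) a b + (pstep P w).1 a b + Qhbar P (fun a b => w.1 a b.+1) a b.
Proof.
rewrite pstep1E /Qhbar /Sprime_mul /sadd /sscale /szero /smulX /pmul /dx /constb.
by case: a => [|a]; case: b => [|b] /=; ring.
Qed.

Lemma expectP_pstep w n :
  expectP P w.1 n = expectP P (constb (fun a => w.1 a 0%N)) n + expectP P (pstep P w).1 n.
Proof.
rewrite -expectPD -[RHS]addr0 -(@expectP_Qhbar P P_low (fun a b => w.1 a b.+1) n) -expectPD.
by apply: eq_expectP => a b; exact: pstep_decomp.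
Qed.

Definition pint_partial O N : ser :=
  fun a => \sum_(k < N) pint_term P (O, fun _ _ => 0) k a.

Lemma expectP_partial O N n : expectP P O n =
  expectP P (constb (pint_partial O N)) n + expectP P (iter N (pstep P) (O, fun _ _ => 0)).1 n.
Proof.
elim: N => [|N IH].
  rewrite (@eq_expectP P (constb (pint_partial O 0)) (fun _ _ => 0)) ?expectP0 ?add0r //.
  by move=> a [|b]; rewrite /constb /pint_partial ?big_ord0.
rewrite IH expectP_pstep addrA -iterS; congr (_ + _); rewrite -expectPD.
apply: eq_expectP => a [|b]; rewrite /constb /pint_partial ?addr0 //.
by rewrite big_ord_recr.
Qed.

Lemma expectP_const c n : expectP P (constb c) n = smul c (expectP P one_obs) n.
Proof.
rewrite expectPE /smul; apply: eq_bigr => a _.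
have -> : constb c a = sscale (c a) (one_obs 0%N).
  by apply: functional_extensionality => -[|b]; rewrite /constb /sscale /one_obs ?mulr1 ?mulr0.
rewrite pexpZ expectPE big_ord_recl /= subn0 big1 ?addr0 // => i _.
suff -> : one_obs (bump 0 i) = szero by exact: pexp0.
by apply: functional_extensionality => b; rewrite /one_obs /bump leq0n add1n.
Qed.

Lemma pint_partial_stable O a N :
  (3 * a < N)%N -> pint_partial O N a = pint_partial O (3 * a).+1 a.
Proof.
move=> aN; have [t ->] : exists t, N = ((3 * a).+1 + t)%N by exists (N - (3 * a).+1)%N; lia.
elim: t => [|t IH]; first by rewrite addn0.
rewrite addnS /pint_partial big_ord_recr /= -/(pint_partial O _ a) IH.
by rewrite /pint_term /proj -/(pstep P) iter_pstep_low ?addr0 //; lia.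
Qed.

Lemma expectP_factor O :
  expectP P O = smul (fun a => pint_partial O (3 * a).+1 a) (expectP P one_obs).
Proof.
apply: functional_extensionality => n.
rewrite (expectP_partial O (6 * n).+1) expectP_const [X in _ + X]expectPE big1 ?addr0.
  apply: eq_bigr => a _; rewrite pint_partial_stable //; have := ltn_ord a; lia.
move=> a _; apply: pexp_low => j jn; apply: iter_pstep_low; have := ltn_ord a; lia.
Qed.

Lemma expectP_one0 : expectP P one_obs 0%N = 1.
Proof.
rewrite expectPE big_ord1 /pexp big_ord1 /pexp_term /gauss /expi_coef /= /pmul big_ord1.
by rewrite /one_obs /= !expr0 coef1 /= fact0 invr1 !mulr1.
Qed.

Lemma pint_expectation O :
  ser_converges (pint_term P (O, fun _ _ => 0)) (sdiv (expectP P O) (expectP P one_obs)).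
Proof.
move=> a; exists (3 * a).+1 => N aN; rewrite -/(pint_partial O N a) pint_partial_stable //.
by rewrite /sdiv expectP_factor smulsK // expectP_one0 oner_neq0.
Qed.

End Projection.

(** * The inclusion and the odd part of the homotopy *)

Lemma iint_term2 P c k a b : (iint_term P c k).2 a b = 0.
Proof.
elim: k a b => [//|k IH] a b.
rewrite /iint_term iterS -/(iint_term P c k) /= big1 => [|j _]; last by rewrite IH mulr0.
by case: a => [|a]; rewrite ?IH ?mulr0 subrr oppr0.
Qed.

Lemma iint_incl P c : sf_converges (iint_term P c) (incl c).
Proof.
move=> a b; split; last by exists 0%N => N _; rewrite big1 // => k _; rewrite iint_term2.
exists 1%N => -[//|N] _; rewrite big_ord_recl big1 ?addr0 // => k _.
by rewrite /iint_term iterS /= oppr0.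
Qed.

Lemma iter_pstep_odd P f k a b : (iter k (pstep P) (fun _ _ => 0, f)).1 a b = 0.
Proof.
elim: k a b => [//|k IH] a b.
rewrite iterS pstep1E big1 => [|j _]; last by rewrite IH mulr0.
by case: a => [|a]; rewrite ?IH ?mulr0 subrr oppr0.
Qed.

Lemma Kint_odd P f : sf_converges (Kint_term P (fun _ _ => 0, f)) sf_zero.
Proof.
move=> a b; split; exists 0%N => N _; rewrite big1 // => k _.
by rewrite /Kint_term /Kop /= -/(pstep P) iter_pstep_odd.
Qed.

(** * The classical limit of the homotopy *)

Section ClassicalLimit.
Variable P : {poly C}.
Hypothesis P_low : forall n, (n < 3)%N -> P`_n = 0.
Variable O : ser.

Definition Sprime_divX : ser := fun b => (Sprime P)`_b.+1.
Definition Pprime_divX : ser := fun b => (P^`())`_b.+1.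

(* hbar^0 coefficient of (-delta K)^k O, divided by x: (-P'/x)^k (O - O(0))/x *)
Definition kcl_term k : ser := fun b => (iter k (pstep P) (embed O)).1 0%N b.+1.
Definition kcl_partial N : ser := fun b => \sum_(k < N) kcl_term k b.

Lemma kcl_termS k b : kcl_term k.+1 b = - smul Pprime_divX (kcl_term k) b.
Proof.
by rewrite /kcl_term iterS pstep1E subr0 big_ord_recl derivP_low // mul0r add0r.
Qed.

Lemma kcl_term_low k b : (b < k)%N -> kcl_term k b = 0.
Proof.
elim: k b => [//|k IH] b bk; rewrite kcl_termS /smul big1 ?oppr0 // => -[[|j] jb] _.
  by rewrite /Pprime_divX derivP_low ?mul0r.
by rewrite IH ?mulr0 //=; lia.
Qed.

Lemma Sprime_divXE : Sprime_divX = fun b => sone b + Pprime_divX b.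
Proof.
apply: functional_extensionality => b.
rewrite /Sprime_divX /Pprime_divX /Sprime !coef_deriv /Spoly coefD coefZ coefXn mulrnDl.
congr (_ + _); case: b => [|b] /=; last by rewrite mulr0 mul0rn.
by rewrite mulr1 -[X in X = _]mulr_natr mulVf // pnatr_eq0.
Qed.

Lemma Sprime_divX0 : Sprime_divX 0%N != 0.
Proof. by rewrite Sprime_divXE /Pprime_divX derivP_low // addr0 oner_neq0. Qed.

Lemma smul_Sprime_divX g b : smul Sprime_divX g b = g b + smul Pprime_divX g b.
Proof.
rewrite Sprime_divXE /smul; under eq_bigr do rewrite mulrDl.
rewrite big_split /= big_ord_recl /= subn0 mul1r big1 ?addr0 // => j _.
by rewrite /bump leq0n add1n mul0r.
Qed.

Lemma smul_kcl_partial N b : smul Sprime_divX (kcl_partial N) b = kcl_term 0 b - kcl_term N b.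
Proof.
rewrite /smul /kcl_partial; under eq_bigr do rewrite mulr_sumr.
rewrite exchange_big /=.
have Pk k : smul Pprime_divX (kcl_term k) b = - kcl_term k.+1 b by rewrite kcl_termS opprK.
under eq_bigr => k _ do rewrite -/(smul Sprime_divX (kcl_term k) b) smul_Sprime_divX Pk.
elim: N => [|N IH]; first by rewrite big_ord0 subrr.
by rewrite big_ord_recr /= IH; ring.
Qed.

(* Both sides become kcl_term 0 - kcl_term N after multiplying by S'(x)/x, and
   kcl_term N vanishes below degree N. *)
Lemma kcl_partial_stable b N : (b < N)%N -> kcl_partial N b = Kcl_coef P O b.
Proof.
move=> bN; set h := Kcl_coef P O.
have Sh : smul Sprime_divX h = kcl_term 0.
  rewrite /h /Kcl_coef /sdiv -/Sprime_divX smulC smulA (smulC (sinv _)).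
  by rewrite smul_sinv ?Sprime_divX0 // smuls1.
set d : ser := fun j => kcl_partial N j - h j.
have dE : d = smul (smul Sprime_divX d) (sinv Sprime_divX).
  by rewrite [smul Sprime_divX d]smulC smulsK // Sprime_divX0.
suff : d b = 0 by move/eqP; rewrite subr_eq0 => /eqP.
rewrite dE {1}/smul big1 // => j _.
rewrite /d smulBr smul_kcl_partial Sh (@kcl_term_low N j) ?subr0 ?subrr ?mul0r //.
by have := ltn_ord j; lia.
Qed.

Lemma Kint_classical b :
  (exists N0, forall N, (N0 <= N)%N ->
     \sum_(k < N) (Kint_term P (embed O) k).1 0%N b = 0) /\
  (exists N0, forall N, (N0 <= N)%N ->
     \sum_(k < N) (Kint_term P (embed O) k).2 0%N b = Kcl_coef P O b).
Proof.
split; first by exists 0%N => N _; rewrite big1.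
by exists b.+1 => N bN; exact: kcl_partial_stable.
Qed.

End ClassicalLimit.

Theorem mainTheorem10 (P : {poly algC})
  (hP : forall n : nat, (n < 3)%N -> P`_n = 0) :
  (forall c : ser, sf_converges (iint_term P c) (incl c)) /\
  (forall O : bser,
     ser_converges (pint_term P (O, fun _ _ => 0))
                   (sdiv (expectP P O) (expectP P one_obs))) /\
  (forall f : bser, sf_converges (Kint_term P (fun _ _ => 0, f)) sf_zero) /\
  (forall (O : ser) (b : nat),
     (exists N0, forall N, (N0 <= N)%N ->
        \sum_(k < N) (Kint_term P (embed O) k).1 0%N b = 0) /\
     (exists N0, forall N, (N0 <= N)%N ->
        \sum_(k < N) (Kint_term P (embed O) k).2 0%N b = Kcl_coef P O b)).
Proof.
split; first exact: iint_incl.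
split; first exact: pint_expectation.
split; first exact: Kint_odd.
exact: Kint_classical.
Qed.
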